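(* Assume that for all $i,j\in I$ the map $u\mapsto\lambda_{ij}(u)$ is continuous on $U$. Then for every bounded continuous function $w\colon\Delta_e\to\mathbb R$, the function $\rho\mapsto r(\rho,u)\int_{\Delta_e}w(p)\,R(\rho,u;dp)$ is continuous on $\Delta_e$ uniformly in $u\in U$; that is, for every $\rho\in\Delta_e$ and $\varepsilon>0$ there is $\delta>0$ such that $\sup_{u\in U}\bigl|r(\rho',u)\int_{\Delta_e}w\,dR(\rho',u;\cdot)-r(\rho,u)\int_{\Delta_e}w\,dR(\rho,u;\cdot)\bigr|<\varepsilon$ for all $\rho'\in\Delta_e$ with $|\rho'-\rho|<\delta$.
   Context: $I$, $O$ are finite sets and $h\colon I\to O$ is surjective and non-constant. $U$ is a compact metric space. For each $u\in U$, $\Lambda(u)=(\lambda_{ij}(u))_{i,j\in I}$ is a real matrix with $\lambda_{ij}(u)\ge0$ for $i\ne j$ and $\sum_j\lambda_{ij}(u)=0$. Measures on $I$ are row vectors in $\mathbb R^{|I|}$; for $a\in O$, $\Delta_a$ is the set of probability measures on $I$ supported in $h^{-1}(a)$, $\Delta_e=\bigcup_{a\in O}\Delta_a$ with the topology of $\mathbb R^{|I|}$, and $\mathbb 1_{h^{-1}(a)}$ is the column indicator vector of $h^{-1}(a)$. For $b\in O$ and a row vector $\mu$, $H_b[\mu]$ is the row vector with $H_b[\mu](i)=0$ for $i\notin h^{-1}(b)$, $H_b[\mu](i)=\mu(i)/(\mu\mathbb 1_{h^{-1}(b)})$ for $i\in h^{-1}(b)$ when $\mu\mathbb 1_{h^{-1}(b)}\ne0$,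 and $H_b[\mu]=\nu_b$ (a fixed arbitrary element of $\Delta_b$) when $\mu\mathbb 1_{h^{-1}(b)}=0$. For $\rho\in\Delta_a$ and $u\in U$: $r(\rho,u)=-\rho\Lambda(u)\mathbb 1_{h^{-1}(a)}$ and $R(\rho,u;D)=\sum_{b\in O}\mathbb 1_D(H_b[\rho\Lambda(u)])\,q(\rho,u,b)$ for Borel $D\subseteq\Delta_e$, where $q(\rho,u,b)=\frac{\rho\Lambda(u)\mathbb 1_{h^{-1}(b)}}{-\rho\Lambda(u)\mathbb 1_{h^{-1}(a)}}\mathbb 1_{b\ne a}$ if $\rho\Lambda(u)\mathbb 1_{h^{-1}(a)}\ne0$ and $q(\rho,u,b)=q_a(b)$ otherwise, with $q_a$ a fixed arbitrary probability on $O\setminus\{a\}$. *)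

From HB Require Import structures.
From mathcomp Require Import all_boot all_order all_algebra.
From mathcomp Require Import all_classical all_reals all_analysis.
Set Implicit Arguments. Unset Strict Implicit. Unset Printing Implicit Defensive.
Import Order.TTheory GRing.Theory Num.Theory.
Local Open Scope ring_scope.

Section Defs.
Variables (R : realType) (I O : finType) (h : I -> O).

(* Measures on I are row vectors, represented as functions I -> R. *)
(* sup-norm distance on R^|I| (all norms are equivalent on R^|I|) *)
Definition vdist (x y : I -> R) : R := \big[Num.max/0]_(i : I) `|x i - y i|.

Definition Delta (a : O) (rho : I -> R) : Prop :=
  [/\ forall i, 0 <= rho i, forall i, h i != a -> rho i = 0 & \sum_i rho i = 1].

Definition Delta_e (rho : I -> R) : Prop := exists a, Delta a rho.

Definition vmul (mu : I -> R) (L : I -> I -> R) : I -> R :=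
  fun j => \sum_i mu i * L i j.

Definition mass (mu : I -> R) (b : O) : R := \sum_(i | h i == b) mu i.

Definition Hb (nu : O -> I -> R) (b : O) (mu : I -> R) : I -> R :=
  if mass mu b != 0 then (fun i => if h i == b then mu i / mass mu b else 0)
  else nu b.

Definition rate (a : O) (rho : I -> R) (L : I -> I -> R) : R :=
  - mass (vmul rho L) a.

Definition qjump (qa : O -> O -> R) (a : O) (rho : I -> R) (L : I -> I -> R)
    (b : O) : R :=
  if mass (vmul rho L) a != 0 then
    (if b != a then mass (vmul rho L) b / (- mass (vmul rho L) a) else 0)
  else qa a b.

Definition Rker (nu : O -> I -> R) (qa : O -> O -> R) (a : O) (rho : I -> R)
    (L : I -> I -> R) (D : set (I -> R)) : R :=
  \sum_(b : O) (if `[< D (Hb nu b (vmul rho L)) >] then 1 else 0)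
               * qjump qa a rho L b.

(* Integral of w against the (finitely atomic) measure R(rho,u;.):
   int w dR(rho,u;.) = sum_b w(H_b[rho Lambda(u)]) q(rho,u,b). *)
Definition Rkint (nu : O -> I -> R) (qa : O -> O -> R) (a : O) (rho : I -> R)
    (L : I -> I -> R) (w : (I -> R) -> R) : R :=
  \sum_(b : O) w (Hb nu b (vmul rho L)) * qjump qa a rho L b.

Definition bounded_on_De (w : (I -> R) -> R) : Prop :=
  exists M : R, forall rho, Delta_e rho -> `|w rho| <= M.

Definition continuous_on_De (w : (I -> R) -> R) : Prop :=
  forall rho, Delta_e rho -> forall eps : R, 0 < eps ->
    exists2 delta : R, 0 < delta &
      forall rho', Delta_e rho' -> vdist rho' rho < delta ->
        `|w rho' - w rho| < eps.

End Defs.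

(* For rho in Delta_a, r(rho,u) * int w dR(rho,u;.) equals
   sum_(b != a) w(H_b[rho Lambda(u)]) * (rho Lambda(u))(h^-1 b), in which the
   defaults nu and q_a no longer appear.  Distinct faces Delta_a are at
   sup-distance at least 1/|I|, so only rho' in Delta_a need be considered.
   Each summand is jointly continuous in (u, rho') at (u0, rho): where the mass
   of h^-1 b is nonzero, H_b and hence w(H_b) are continuous; where it
   vanishes, the summand tends to 0 because w is bounded.  Compactness of U
   makes this joint continuity uniform in u. *)

From HB Require Import structures.
From mathcomp Require Import all_boot all_order all_algebra.
From mathcomp Require Import all_classical all_reals all_analysis.
From mathcomp Require Import ring.
Import Order.TTheory GRing.Theory Num.Theory.
Import numFieldNormedType.Exports.
Local Open Scope ring_scope.

Section Vdist.
Context {R : realType} {I : finType}.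
Implicit Types (x y : I -> R).

Lemma vdist_ge0 x y : 0 <= vdist x y.
Proof. by rewrite /vdist; elim/big_ind: _ => // p q p0 q0; rewrite le_max p0. Qed.

Lemma dist_le_vdist x y i : `|x i - y i| <= vdist x y.
Proof. by rewrite /vdist (bigD1 i) //= le_max lexx. Qed.

Lemma vdist_lt x y (d : R) :
  0 < d -> (forall i, `|x i - y i| < d) -> vdist x y < d.
Proof.
move=> d_gt0 xy_lt; rewrite /vdist.
by elim/big_ind: _ => // p q; rewrite gt_max => ->.
Qed.

Lemma vdistxx x : vdist x x = 0.
Proof.
apply/eqP; rewrite eq_le vdist_ge0 andbT /vdist.
by elim/big_ind: _ => // [p q p0 q0|i _]; rewrite ?ge_max ?p0 // subrr normr0.
Qed.

End Vdist.

Lemma Delta_eq_of_vdist_lt {R : realType} {I O : finType} {h : I -> O} {a a'}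
    {rho rho' : I -> R} :
  Delta h a rho -> Delta h a' rho' -> vdist rho' rho < #|I|%:R^-1 -> a' = a.
Proof.
move=> [rho_ge0 rho_out rho_sum] [_ rho'_out _] close.
apply/eqP; apply: contraTT close => a'a; rewrite -leNgt.
have sum_le : 1 <= #|I|%:R * vdist rho' rho.
  rewrite mulr_natl -sumr_const -rho_sum; apply: ler_sum => i _.
  have [hi|hi] := eqVneq (h i) a; last by rewrite rho_out ?vdist_ge0.
  apply: le_trans _ (dist_le_vdist rho' rho i).
  by rewrite rho'_out ?hi 1?eq_sym // sub0r normrN ger0_norm.
have card_gt0 : 0 < #|I|%:R :> R.
  move: sum_le; rewrite lt0r ler0n andbT.
  by apply: contraTneq => ->; rewrite mul0r ler10.
by rewrite -(ler_pM2l card_gt0) mulfV ?gt_eqF.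
Qed.

Definition jump_flux {R : realType} {I O : finType} (h : I -> O)
    (nu : O -> I -> R) (w : (I -> R) -> R) (a : O) (rho : I -> R)
    (L : I -> I -> R) : R :=
  \sum_(b | b != a) w (Hb h nu b (vmul rho L)) * mass h (vmul rho L) b.

Section Generator.
Context {R : realType} {I O : finType} (h : I -> O) {L : I -> I -> R}.
Hypothesis L_offdiag : forall i j, i != j -> 0 <= L i j.
Hypothesis L_rows : forall i, \sum_j L i j = 0.

Lemma vmul_ge0 {a rho} : Delta h a rho -> forall j, h j != a -> 0 <= vmul rho L j.
Proof.
move=> [rho_ge0 rho_out _] j hj; apply: sumr_ge0 => i _.
have [hi|hi] := eqVneq (h i) a; last by rewrite rho_out // mul0r.
by apply/mulr_ge0/L_offdiag => //; apply: contraNneq hj => <-; rewrite hi.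
Qed.

Lemma mass_ge0 {a rho} :
  Delta h a rho -> forall b, b != a -> 0 <= mass h (vmul rho L) b.
Proof.
move=> Drho b ba; apply: sumr_ge0 => j /eqP hj.
by apply: (vmul_ge0 Drho); rewrite hj.
Qed.

Lemma sum_mass_vmul rho : \sum_b mass h (vmul rho L) b = 0.
Proof.
have -> : \sum_b mass h (vmul rho L) b = \sum_i vmul rho L i.
  by rewrite (partition_big h xpredT).
rewrite exchange_big /=.
by apply: big1 => i _; rewrite -mulr_sumr L_rows mulr0.
Qed.

Lemma Delta_Hb {nu a b rho} : (forall b, Delta h b (nu b)) -> Delta h a rho ->
  b != a -> Delta h b (Hb h nu b (vmul rho L)).
Proof.
move=> nu_in Drho ba; rewrite /Hb; case: ifPn => // m_neq0.
have m_gt0 : 0 < mass h (vmul rho L) b by rewrite lt_def m_neq0 (mass_ge0 Drho).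
split.
- move=> i; case: ifPn => // /eqP hi.
  by rewrite divr_ge0 ?(ltW m_gt0) // (vmul_ge0 Drho) ?hi.
- by move=> i /negPf ->.
- by rewrite -big_mkcond /= -mulr_suml mulfV.
Qed.

(* When the exit rate [- mass (rho L) a] vanishes, so do all the masses
   [mass (rho L) b], b != a, which makes the junk default [qa] irrelevant. *)
Lemma rate_Rkint nu qa w a rho : Delta h a rho ->
  rate h a rho L * Rkint h nu qa a rho L w = jump_flux h nu w a rho L.
Proof.
move=> Drho; rewrite /rate /Rkint /qjump /jump_flux.
set m := mass h (vmul rho L).
have [ma0|ma0] := eqVneq (m a) 0.
  rewrite ma0 oppr0 mul0r; symmetry; apply: big1 => b ba.
  have := sum_mass_vmul rho; rewrite (bigD1 a) //= -/m ma0 add0r => sum0.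
  by rewrite (psumr_eq0P _ sum0) ?mulr0 // => c; apply: mass_ge0.
rewrite mulr_sumr [RHS]big_mkcond /=; apply: eq_bigr => b _.
by case: ifPn => ba; [field | rewrite !mulr0].
Qed.

End Generator.

Local Open Scope classical_set_scope.

Lemma cvg_bounded_mul0 {K : realFieldType} {T : Type} {F : set_system T}
    {FF : Filter F} {f g : T -> K} (M : K) :
  (\forall t \near F, `|g t| <= M) -> f @ F --> 0 ->
  (fun t => g t * f t) @ F --> 0.
Proof.
move=> g_bnd f0; apply/cvgr0Pnorm_lt => e e_gt0.
have M1_gt0 : 0 < `|M| + 1 by rewrite ltr_wpDl.
near=> t.
have g_le : `|g t| <= `|M| + 1.
  apply: le_trans (ler_wpDr ler01 (ler_norm M)); near: t; exact: g_bnd.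
rewrite normrM (le_lt_trans (ler_wpM2r (normr_ge0 _) g_le)) //.
rewrite mulrC -ltr_pdivlMr //; near: t.
by apply: cvgr0_norm_lt => //; rewrite divr_gt0.
Unshelve. all: by end_near.
Qed.

Section Convergence.
Context {R : realType} {I O : finType} (h : I -> O).
Context {T : Type} {F : set_system T} {FF : Filter F}.

Lemma cvg_vmul (r : T -> I -> R) (r0 : I -> R) (L : T -> I -> I -> R)
    (L0 : I -> I -> R) :
  (forall i, (fun t => r t i) @ F --> r0 i) ->
  (forall i j, (fun t => L t i j) @ F --> L0 i j) ->
  forall j, (fun t => vmul (r t) (L t) j) @ F --> vmul r0 L0 j.
Proof.
move=> r_cvg L_cvg j; apply: cvg_big => // [|i _]; first exact: add_continuous.
exact: cvgM.
Qed.

Lemma continuous_on_De_cvg (w : (I -> R) -> R) (p : T -> I -> R) (p0 : I -> R) :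
  continuous_on_De h w -> Delta_e h p0 -> (\forall t \near F, Delta_e h (p t)) ->
  (forall i, (fun t => p t i) @ F --> p0 i) -> (fun t => w (p t)) @ F --> w p0.
Proof.
move=> w_cont De_p0 De_p p_cvg; apply/cvgrPdist_lt => e e_gt0.
have [d d_gt0 w_close] := w_cont _ De_p0 _ e_gt0.
have p_close : \forall t \near F, forall i, `|p0 i - p t i| < d.
  by apply: filter_forall => i; apply: cvgr_dist_lt.
near=> t; rewrite distrC; apply: w_close; first by near: t.
by apply: vdist_lt => // i; rewrite distrC; move: i; near: t.
Unshelve. all: by end_near.
Qed.

Section Family.
Variables (mu : T -> I -> R) (mu0 : I -> R).
Hypothesis mu_cvg : forall i, (fun t => mu t i) @ F --> mu0 i.

Lemma cvg_mass b : (fun t => mass h (mu t) b) @ F --> mass h mu0 b.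
Proof. by apply: cvg_big => //; exact: add_continuous. Qed.

Lemma cvg_Hb nu b : mass h mu0 b != 0 ->
  forall i, (fun t => Hb h nu b (mu t) i) @ F --> Hb h nu b mu0 i.
Proof.
move=> m0_neq0 i; rewrite {2}/Hb m0_neq0.
have m_neq0 : \forall t \near F, mass h (mu t) b != 0.
  exact: cvgr_neq0 _ (cvg_mass b) m0_neq0.
pose g t := if h i == b then mu t i / mass h (mu t) b else 0.
apply: (@cvg_trans _ (g @ F)).
  by apply: near_eq_cvg; near=> t; rewrite /Hb ifT //; near: t.
rewrite /g; case: (h i == b); last exact: cvg_cst.
exact: cvgM (mu_cvg i) (cvgV m0_neq0 (cvg_mass b)).
Unshelve. all: by end_near.
Qed.

Lemma cvg_w_Hb_mul_mass nu w b : bounded_on_De h w -> continuous_on_De h w ->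
  Delta_e h (Hb h nu b mu0) ->
  (\forall t \near F, Delta_e h (Hb h nu b (mu t))) ->
  (fun t => w (Hb h nu b (mu t)) * mass h (mu t) b) @ F -->
  w (Hb h nu b mu0) * mass h mu0 b.
Proof.
move=> [M w_le] w_cont De_Hb0 De_Hb.
have [m0_eq0|m0_neq0] := eqVneq (mass h mu0 b) 0.
  rewrite m0_eq0 mulr0; apply: (cvg_bounded_mul0 M).
    by near=> t; apply: w_le; near: t.
  by rewrite -m0_eq0; exact: cvg_mass.
apply: cvgM (cvg_mass b); apply: continuous_on_De_cvg => //.
exact: cvg_Hb.
Unshelve. all: by end_near.
Qed.

End Family.
End Convergence.

Lemma cvg_jump_flux {R : realType} {I O : finType} (h : I -> O) {T : Type}
    {F : set_system T} {FF : Filter F} nu w a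
    (r : T -> I -> R) (r0 : I -> R) (L : T -> I -> I -> R) (L0 : I -> I -> R) :
  (forall b, Delta h b (nu b)) -> bounded_on_De h w -> continuous_on_De h w ->
  (forall t i j, i != j -> 0 <= L t i j) -> (forall i j, i != j -> 0 <= L0 i j) ->
  Delta h a r0 -> (\forall t \near F, Delta h a (r t)) ->
  (forall i, (fun t => r t i) @ F --> r0 i) ->
  (forall i j, (fun t => L t i j) @ F --> L0 i j) ->
  (fun t => jump_flux h nu w a (r t) (L t)) @ F --> jump_flux h nu w a r0 L0.
Proof.
move=> nu_in w_bnd w_cont L_offdiag L0_offdiag Dr0 Dr r_cvg L_cvg.
apply: cvg_big => [|b ba]; first exact: add_continuous.
apply: cvg_w_Hb_mul_mass => //; first exact: cvg_vmul.
  by exists b; exact: (Delta_Hb h L0_offdiag nu_in Dr0 ba).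
near=> t; have Drt : Delta h a (r t) by near: t.
by exists b; exact: (Delta_Hb h (L_offdiag t) nu_in Drt ba).
Unshelve. all: by end_near.
Qed.

Lemma compact_cvg_uniform {K : numFieldType} {U : topologicalType} {T : Type}
    {F : set_system T} {FF : Filter F} (t0 : T) (Phi : U -> T -> K) :
  compact [set: U] -> (forall B, F B -> B t0) ->
  (forall u0, (fun p => Phi p.1 p.2) @ filter_prod (nbhs u0) F --> Phi u0 t0) ->
  forall e : K, 0 < e -> \forall t \near F, forall u, `|Phi u t - Phi u t0| <= e.
Proof.
move=> U_compact F_t0 Phi_cvg e e_gt0.
have e2_gt0 : 0 < e / 2 by rewrite divr_gt0.
have Phi_local (u0 : U) :
    \forall u \near u0 & t \near F, `|Phi u t - Phi u t0| <= e.
  have [[A B] /= [A_u0 B_F] AB_close] :=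
    cvgr_dist_lt _ _ (Phi_cvg u0) (e / 2) e2_gt0.
  exists (A, B) => // -[u t] /= [Au Bt].
  have close_t := AB_close (u, t) (conj Au Bt).
  have close_t0 := AB_close (u, t0) (conj Au (F_t0 B B_F)).
  rewrite /= in close_t close_t0.
  have -> : Phi u t - Phi u t0 = (Phi u0 t0 - Phi u t0) - (Phi u0 t0 - Phi u t).
    by ring.
  by rewrite (le_trans (ler_normB _ _)) // [e]splitr lerD ?ltW.
have := (compact_near_coveringP _).1 U_compact T F _ FF
  (fun u0 _ => Phi_local u0).
by apply: filterS => t close u; exact: close.
Qed.

Section DeltaNbhs.
Context {R : realType} {I O : finType} (h : I -> O) (a : O) (rho : I -> R).

Definition Delta_nbhs : set_system (I -> R) :=
  filter_from [set d : R | 0 < d]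
    (fun d => [set r | Delta h a r /\ vdist r rho < d]).

Global Instance Delta_nbhs_filter : Filter Delta_nbhs.
Proof.
apply: filter_from_filter; first by exists 1 => /=.
move=> d1 d2 d1_gt0 d2_gt0; exists (Num.min d1 d2).
  by rewrite /= lt_min d1_gt0 d2_gt0.
by move=> r [Dr]; rewrite lt_min => /andP[].
Qed.

Lemma Delta_nbhs_Delta : \forall r \near Delta_nbhs, Delta h a r.
Proof. by exists 1 => /= [|r []]. Qed.

Lemma Delta_nbhs_center B : Delta h a rho -> Delta_nbhs B -> B rho.
Proof. by move=> Drho [d d_gt0]; apply; rewrite /= vdistxx. Qed.

Lemma cvg_Delta_nbhs i : (fun r => r i) @ Delta_nbhs --> rho i.
Proof.
apply/cvgrPdist_lt => e e_gt0; exists e => // r [_ r_close].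
by rewrite /= distrC (le_lt_trans (dist_le_vdist _ _ i)).
Qed.

End DeltaNbhs.

Lemma jump_flux_uniform {R : realType} {I O : finType} (h : I -> O)
    {U : topologicalType} (Lambda : U -> I -> I -> R) {nu w a rho} (e : R) :
  compact [set: U] ->
  (forall u i j, i != j -> 0 <= Lambda u i j) ->
  (forall i j, continuous (fun u => Lambda u i j)) ->
  (forall b, Delta h b (nu b)) -> bounded_on_De h w -> continuous_on_De h w ->
  Delta h a rho -> 0 < e ->
  \forall r \near Delta_nbhs h a rho, forall u,
    `|jump_flux h nu w a r (Lambda u) - jump_flux h nu w a rho (Lambda u)| <= e.
Proof.
move=> U_compact Lambda_offdiag Lambda_cont nu_in w_bnd w_cont Drho e_gt0.
apply: (compact_cvg_uniform rho (fun u r => jump_flux h nu w a r (Lambda u))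
  U_compact _ _ e e_gt0).
  by move=> B; exact: Delta_nbhs_center.
move=> u0; apply: cvg_jump_flux => //.
- by move=> t; exact: Lambda_offdiag.
- exact: Lambda_offdiag.
- exists (setT, Delta h a); last by move=> [u r] [].
  by split; [exact: filterT | exact: Delta_nbhs_Delta].
- move=> i; apply: (cvg_comp snd (fun r => r i)); first exact: cvg_snd.
  exact: cvg_Delta_nbhs.
- move=> i j; apply: (cvg_comp fst (fun u => Lambda u i j)); first exact: cvg_fst.
  exact: Lambda_cont.
Qed.

Local Close Scope classical_set_scope.

Theorem mainTheorem5 (R : realType) (I O : finType) (h : I -> O)
  (h_surj : forall b : O, exists i : I, h i = b)
  (h_nonconst : exists i j : I, h i != h j)
  (U : pseudoMetricType R) (U_hausdorff : hausdorff_space U)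
  (U_compact : compact [set: U])
  (Lambda : U -> I -> I -> R)
  (Lambda_offdiag : forall u i j, i != j -> 0 <= Lambda u i j)
  (Lambda_rows : forall u i, \sum_j Lambda u i j = 0)
  (nu : O -> I -> R) (nu_in : forall b, Delta h b (nu b))
  (qa : O -> O -> R)
  (qa_ge0 : forall a b, 0 <= qa a b) (qa_diag : forall a, qa a a = 0)
  (qa_sum : forall a, \sum_b qa a b = 1)
  (Lambda_cont : forall i j : I, continuous (fun u : U => Lambda u i j))
  (w : (I -> R) -> R)
  (w_bnd : bounded_on_De h w) (w_cont : continuous_on_De h w) :
  forall (a : O) (rho : I -> R), Delta h a rho ->
  forall eps : R, 0 < eps ->
  exists2 delta : R, 0 < delta &
    forall (a' : O) (rho' : I -> R), Delta h a' rho' -> vdist rho' rho < delta ->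
      exists2 s : R, s < eps &
        forall u : U,
          `| rate h a' rho' (Lambda u) * Rkint h nu qa a' rho' (Lambda u) w
             - rate h a rho (Lambda u) * Rkint h nu qa a rho (Lambda u) w | <= s.
Proof.
move=> a rho Drho eps eps_gt0.
have eps2_gt0 : 0 < eps / 2 by rewrite divr_gt0.
have [d d_gt0 flux_close] := jump_flux_uniform h Lambda (eps / 2) U_compact
  Lambda_offdiag Lambda_cont nu_in w_bnd w_cont Drho eps2_gt0.
have card_gt0 : 0 < #|I|%:R :> R.
  by have [i _] := h_nonconst; rewrite ltr0n; apply/card_gt0P; exists i.
exists (Num.min d #|I|%:R^-1); first by rewrite lt_min d_gt0 invr_gt0.
move=> a' rho' Drho'; rewrite lt_min => /andP[rho'_d rho'_I].
have a'_eq := Delta_eq_of_vdist_lt Drho Drho' rho'_I; subst a'.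
exists (eps / 2); first by rewrite ltr_pdivrMr // ltr_pMr // ltr1n.
move=> u; rewrite !(rate_Rkint h (Lambda_offdiag u) (Lambda_rows u)) //.
exact: flux_close.
Qed.
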